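(* Let $\rho,\sigma,\alpha\in\mathbb{F}\setminus\{\frac12\}$, and let $\mathbf{A}$ be the 5-dimensional LV algebra with natural basis $e_1,\dots,e_5$ in which $e_1e_2=\rho e_1+(1-\rho)e_2$, $e_2e_3=\sigma e_2+(1-\sigma)e_3$, $e_3e_4=\alpha e_3+(1-\alpha)e_4$, $e_3e_5=\alpha e_3+(1-\alpha)e_5$, and $e_ie_j=\frac12(e_i+e_j)$ for all other pairs $i,j$. Then $\mathrm{Der}(\mathbf{A})=\{f\in L(\mathbf{A}) : f(e_1)=f(e_2)=f(e_3)=0 \text{ and } \mathrm{Im}(f)\subseteq\langle e_4-e_5\rangle\}$.
   Context: Let $\mathbb{F}$ be a field of characteristic different from $2$. A Lotka–Volterra (LV) algebra of dimension $5$ over $\mathbb{F}$ is a commutative (not necessarily associative) $\mathbb{F}$-algebra $\mathbf{A}$ with a basis $e_1,\dots,e_5$ (the natural basis) such that $e_ie_j=\alpha_{ij}e_i+\alpha_{ji}e_j$ with $\alpha_{ij}\in\mathbb{F}$, $\alpha_{ii}=\frac12$ and $\alpha_{ij}+\alpha_{ji}=1$ for all $i,j$. A derivation is a linear map $D:\mathbf{A}\to\mathbf{A}$ with $D(uv)=D(u)v+uD(v)$ for all $u,v$; $\mathrm{Der}(\mathbf{A})$ is the set of derivations, $L(\mathbf{A})$ the set of linear maps $\mathbf{A}\to\mathbf{A}$, and $\langle x_1,\dots,x_k\rangle$ the linear span. *)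

From HB Require Import structures.
From mathcomp Require Import all_boot all_order all_algebra.
Set Implicit Arguments. Unset Strict Implicit. Unset Printing Implicit Defensive.
Import GRing.Theory.
Local Open Scope ring_scope.

(* Elements of a 5-dim algebra over F are row vectors 'rV[F]_5 in the
   natural basis e_0..e_4 (paper's e_1..e_5); e i = delta_mx 0 i. *)
Definition e (F : fieldType) (i : 'I_5) : 'rV[F]_5 := delta_mx 0 i.

Definition lv_mul (F : fieldType) (a : 'I_5 -> 'I_5 -> F) (u v : 'rV[F]_5)
  : 'rV[F]_5 :=
  \sum_(i < 5) \sum_(j < 5) (u 0 i * v 0 j) *: (a i j *: e F i + a j i *: e F j).

(* Linear maps A -> A are matrices acting on row vectors: f(v) = v *m M. *)
Definition is_derivation (F : fieldType) (a : 'I_5 -> 'I_5 -> F)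
  (M : 'M[F]_5) : Prop :=
  forall u v : 'rV[F]_5,
    lv_mul a u v *m M = lv_mul a (u *m M) v + lv_mul a u (v *m M).

(* The table of the theorem (0-indexed: paper e_k is index k-1). *)
Definition thm7_table (F : fieldType) (rho sigma alpha : F)
  (i j : 'I_5) : F :=
  match nat_of_ord i, nat_of_ord j with
  | 0%N, 1%N => rho   | 1%N, 0%N => 1 - rho
  | 1%N, 2%N => sigma | 2%N, 1%N => 1 - sigma
  | 2%N, 3%N => alpha | 3%N, 2%N => 1 - alpha
  | 2%N, 4%N => alpha | 4%N, 2%N => 1 - alpha
  | _, _ => 2%:R^-1
  end.

From HB Require Import structures.
From mathcomp Require Import all_boot all_order all_algebra.
From mathcomp Require Import ring.
Set Implicit Arguments. Unset Strict Implicit.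
Import GRing.Theory.
Local Open Scope ring_scope.

(* Testing the derivation rule on pairs of basis vectors gives linear equations on the
   entries of M.  Since e_i^2 = e_i, a derivation has M i k = 0 whenever a k i <> 1/2;
   the mixed products e_i e_j then propagate such zeros, and the diagonal is fixed by
   sum_l M i l * a i l = 0.  Conversely e_4 and e_5 are twins (equal rows and columns
   in the structure table), so w = e_4 - e_5 satisfies w v = lambda(v) w for a linear
   form lambda; a map D = phi(.) w vanishing on the other basis vectors then satisfies
   D(uv) = (phi(u) lambda(v) + phi(v) lambda(u)) w = D(u) v + u D(v). *)

Lemma sum_ord5 (R : nmodType) (f : 'I_5 -> R) :
  \sum_(l < 5) f l = f (inord 0) + f (inord 1) + f (inord 2) + f (inord 3) + f (inord 4).
Proof.
rewrite (eq_bigr (fun l : 'I_5 => f (inord l))) => [|l _]; last by rewrite inord_val.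
by rewrite -(big_mkord xpredT (fun n => f (inord n))) /index_iota /= !big_cons big_nil addr0 !addrA.
Qed.

Lemma ord5_ind (P : 'I_5 -> Prop) :
  P (inord 0) -> P (inord 1) -> P (inord 2) -> P (inord 3) -> P (inord 4) -> forall k, P k.
Proof.
move=> P0 P1 P2 P3 P4 k; rewrite -[k]inord_val.
by case: k => -[|[|[|[|[|n]]]]].
Qed.

Lemma sum_delta (R : pzSemiRingType) (I : finType) (f : I -> R) i :
  \sum_l (i == l)%:R * f l = f i.
Proof.
rewrite (bigD1 i) //= eqxx mul1r big1 ?addr0 // => l nli.
by rewrite eq_sym (negbTE nli) mul0r.
Qed.

Lemma eq0_mulfI (F : fieldType) (x y z : F) : x * y = x * z -> y != z -> x = 0.
Proof. by move=> E; apply: contraNeq => /mulfI/(_ y z E)/eqP. Qed.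

Lemma mulmx_in_line (R : pzSemiRingType) m n (M : 'M[R]_(m, n)) (w : 'rV[R]_n) :
  (forall l, exists x, row l M = x *: w) -> forall v, exists x, v *m M = x *: w.
Proof.
move=> /fin_all_exists [c Mc] v; exists (\sum_l v 0 l * c l).
by rewrite mulmx_sum_row scaler_suml; apply: eq_bigr => l _; rewrite Mc scalerA.
Qed.

Section LVDerivations.

Variables (F : fieldType) (a : 'I_5 -> 'I_5 -> F).

Lemma e_coord i k : e F i 0 k = (i == k)%:R.
Proof. by rewrite mxE eqxx eq_sym. Qed.

Lemma eB_coord i j k : (e F i - e F j) 0 k = (i == k)%:R - (j == k)%:R.
Proof. by rewrite !mxE eqxx /= !(eq_sym k). Qed.

Lemma lv_mulE u v k :
  lv_mul a u v 0 k = u 0 k * \sum_l v 0 l * a k l + v 0 k * \sum_l u 0 l * a k l.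
Proof.
rewrite /lv_mul summxE.
transitivity (\sum_i \sum_j
  (u 0 i * v 0 j * a i j * (i == k)%:R + u 0 i * v 0 j * a j i * (j == k)%:R)).
  apply: eq_bigr => i _; rewrite summxE; apply: eq_bigr => j _.
  by rewrite !mxE eqxx /= !(eq_sym k) mulrDr !mulrA.
under eq_bigr => i _ do rewrite big_split.
rewrite big_split /= [X in _ + X]exchange_big /=; congr (_ + _).
  rewrite (bigD1 k) //= [X in _ + X]big1 ?addr0 => [|i /negbTE nik].
    by rewrite mulr_sumr; apply: eq_bigr => j _; rewrite eqxx mulr1 mulrA.
  by apply: big1 => j _; rewrite nik !mulr0.
rewrite (bigD1 k) //= [X in _ + X]big1 ?addr0 => [|j /negbTE njk].
  by rewrite mulr_sumr; apply: eq_bigr => i _; rewrite eqxx mulr1 mulrCA mulrA.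
by rewrite big1 // => i _; rewrite njk mulr0.
Qed.

Lemma lv_mulC u v : lv_mul a u v = lv_mul a v u.
Proof. by apply/rowP => k; rewrite !lv_mulE addrC. Qed.

Lemma lv_mulZl x (u v : 'rV[F]_5) : lv_mul a (x *: u) v = x *: lv_mul a u v.
Proof.
apply/rowP => k; rewrite (lv_mulE (x *: u)) [RHS]mxE lv_mulE mxE.
rewrite [X in v 0 k * X](eq_bigr (fun l => x * (u 0 l * a k l))) => [|l _].
  by rewrite -mulr_sumr; ring.
by rewrite mxE mulrA.
Qed.

Lemma lv_mul_eE i v k :
  lv_mul a (e F i) v 0 k = (i == k)%:R * \sum_l v 0 l * a k l + v 0 k * a k i.
Proof.
rewrite lv_mulE e_coord; congr (_ + _ * _).
by under eq_bigr => l _ do rewrite e_coord; rewrite sum_delta.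
Qed.

Section Derivation.

Variables (M : 'M[F]_5) (D : is_derivation a M).

Lemma derivation_coord i j k :
  a i j * M i k + a j i * M j k =
  M i k * a k j + M j k * a k i +
  (j == k)%:R * \sum_l M i l * a k l + (i == k)%:R * \sum_l M j l * a k l.
Proof.
have L : (lv_mul a (e F i) (e F j) *m M) 0 k = a i j * M i k + a j i * M j k.
  rewrite mxE (eq_bigr (fun l => (i == l)%:R * (a l j * M l k) + (j == l)%:R * (a l i * M l k))).
    by rewrite big_split /= !sum_delta.
  move=> l _; rewrite lv_mul_eE e_coord (eq_bigr (fun m => (j == m)%:R * a l m)) ?sum_delta.
    by rewrite mulrDl -!mulrA.
  by move=> m _; rewrite e_coord.
rewrite -L D /e -!rowE !mxE (lv_mulC (row i M)) !lv_mul_eE !mxE.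
under [X in (j == k)%:R * X]eq_bigr => l _ do rewrite mxE.
under [X in (i == k)%:R * X]eq_bigr => l _ do rewrite mxE.
by ring.
Qed.

Lemma derivation_mixed_eq0 i j k :
  k != i -> k != j -> M j k = 0 -> a k j != a i j -> M i k = 0.
Proof.
move=> nki nkj Mjk naj; move: (derivation_coord i j k).
rewrite Mjk eq_sym (negbTE nkj) eq_sym (negbTE nki) !mul0r !mulr0 !addr0 mulrC.
by move/eq0_mulfI; apply; rewrite eq_sym.
Qed.

Variable (two_neq0 : 2%:R != 0 :> F).

Lemma derivation_square_eq0 i k : k != i -> a k i != a i i -> M i k = 0.
Proof.
move=> nki nai; move: (derivation_coord i i k).
rewrite eq_sym (negbTE nki) !mul0r !addr0 => E.
have /(mulIf two_neq0) : a i i * M i k * 2%:R = M i k * a k i * 2%:R.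
  by rewrite !mulr_natr !mulr2n E.
by rewrite mulrC => /eq0_mulfI; apply; rewrite eq_sym.
Qed.

Lemma derivation_row_sum i : \sum_l M i l * a i l = 0.
Proof.
move: (derivation_coord i i i); rewrite eqxx mul1r mulrC -addrA -[LHS]addr0 => /addrI E.
have /eqP : (\sum_l M i l * a i l) * 2%:R = 0 by rewrite mulr_natr mulr2n -E.
by rewrite mulf_eq0 (negbTE two_neq0) orbF => /eqP.
Qed.

End Derivation.

Section Twins.

Variables (i j : 'I_5) (nij : i != j).
Hypotheses (twin_row : forall l, a i l = a j l) (twin_col : forall k, a k i = a k j).

Lemma lv_mul_twin v :
  lv_mul a (e F i - e F j) v = (\sum_l v 0 l * a i l) *: (e F i - e F j).
Proof.
apply/rowP => k; rewrite lv_mulE [RHS]mxE !eB_coord.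
have -> : \sum_l (e F i - e F j) 0 l * a k l = 0.
  under eq_bigr => l _ do rewrite eB_coord mulrBl.
  by rewrite sumrB !sum_delta twin_col subrr.
rewrite mulr0 addr0 mulrC.
have [<-|nik] := eqVneq i k; first by [].
have [<-|njk] := eqVneq j k; last by rewrite subrr !mulr0.
by congr (_ * _); apply: eq_bigr => l _; rewrite twin_row.
Qed.

Lemma twin_derivation (M : 'M[F]_5) :
  (forall l, l != i -> l != j -> e F l *m M = 0) ->
  (forall v, exists x, v *m M = x *: (e F i - e F j)) ->
  is_derivation a M.
Proof.
move=> Mker Mim; pose A (v : 'rV[F]_5) := \sum_l v 0 l * a i l.
have vM v : v *m M = (v *m M) 0 i *: (e F i - e F j).
  have [x ->] := Mim v.
  by rewrite mxE eB_coord eqxx [j == i]eq_sym (negbTE nij) subr0 mulr1.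
have Mcol l : M l i = 0 \/ (forall m, a l m = a i m).
  have [->|nli] := eqVneq l i; first by right.
  have [->|nlj] := eqVneq l j; first by right=> m; rewrite twin_row.
  by left; move: (congr1 (fun w : 'rV_5 => w 0 i) (Mker l nli nlj)); rewrite /e -rowE !mxE.
have phi_mul u v : (lv_mul a u v *m M) 0 i = (u *m M) 0 i * A v + (v *m M) 0 i * A u.
  rewrite !mxE !mulr_suml -big_split; apply: eq_bigr => l _ /=.
  rewrite lv_mulE; have [->|Al] := Mcol l; first by rewrite !mulr0 !mul0r addr0.
  have AlE (w : 'rV_5) : \sum_m w 0 m * a l m = A w by apply: eq_bigr => m _; rewrite Al.
  by rewrite !AlE; ring.
move=> u v; rewrite (vM (lv_mul a u v)) (vM u) (vM v) phi_mul (lv_mulC u) !lv_mulZl.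
by rewrite !lv_mul_twin !scalerA -scalerDl.
Qed.

End Twins.

End LVDerivations.

Lemma half_neqs (F : fieldType) (t : F) : 2%:R != 0 :> F -> t != 2%:R^-1 ->
  [/\ 2%:R^-1 != t, 1 - t != 2%:R^-1 & 2%:R^-1 != 1 - t].
Proof.
move=> two_neq0 ht; have ht' : 1 - t != 2%:R^-1.
  apply: contra ht => /eqP E; apply/eqP.
  by rewrite -[t](subKr 1) E; field.
by split; rewrite // eq_sym.
Qed.

Section Theorem7.

Variables (F : fieldType) (rho sigma alpha : F).
Local Notation a := (thm7_table rho sigma alpha).
Local Notation i0 := (@inord 4 0).
Local Notation i1 := (@inord 4 1).
Local Notation i2 := (@inord 4 2).
Local Notation i3 := (@inord 4 3).
Local Notation i4 := (@inord 4 4).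

Lemma thm7_twin_row l : a i3 l = a i4 l.
Proof. by move: l; apply: ord5_ind; rewrite /thm7_table !inordK. Qed.

Lemma thm7_twin_col k : a k i3 = a k i4.
Proof. by move: k; apply: ord5_ind; rewrite /thm7_table !inordK. Qed.

Hypotheses (two_neq0 : 2%:R != 0 :> F) (hrho : rho != 2%:R^-1)
  (hsigma : sigma != 2%:R^-1) (halpha : alpha != 2%:R^-1).

Local Ltac table := rewrite -?val_eqE /thm7_table /= ?inordK //.

Lemma thm7_derivation_rows (M : 'M[F]_5) : is_derivation a M ->
  [/\ row i0 M = 0, row i1 M = 0, row i2 M = 0,
      row i3 M = M i3 i3 *: (e F i3 - e F i4) & row i4 M = M i4 i3 *: (e F i3 - e F i4)].
Proof.
move=> D; have [rho1 rho2 rho3] := half_neqs two_neq0 hrho.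
have [sigma1 sigma2 sigma3] := half_neqs two_neq0 hsigma.
have [alpha1 alpha2 alpha3] := half_neqs two_neq0 halpha.
have square0 := derivation_square_eq0 D two_neq0; have mixed0 := derivation_mixed_eq0 D.
have M01 : M i0 i1 = 0 by apply: square0; table.
have M10 : M i1 i0 = 0 by apply: square0; table.
have M12 : M i1 i2 = 0 by apply: square0; table.
have M21 : M i2 i1 = 0 by apply: square0; table.
have M23 : M i2 i3 = 0 by apply: square0; table.
have M24 : M i2 i4 = 0 by apply: square0; table.
have M32 : M i3 i2 = 0 by apply: square0; table.
have M42 : M i4 i2 = 0 by apply: square0; table.
(* Each mixed step transfers a zero found earlier. *)
have M03 : M i0 i3 = 0 by apply: (mixed0 _ i2); table.
have M04 : M i0 i4 = 0 by apply: (mixed0 _ i2); table.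
have M31 : M i3 i1 = 0 by apply: (mixed0 _ i0); table.
have M41 : M i4 i1 = 0 by apply: (mixed0 _ i0); table.
have M02 : M i0 i2 = 0 by apply: (mixed0 _ i3); table.
have M30 : M i3 i0 = 0 by apply: (mixed0 _ i1); table.
have M40 : M i4 i0 = 0 by apply: (mixed0 _ i1); table.
have M13 : M i1 i3 = 0 by apply: (mixed0 _ i0); table.
have M14 : M i1 i4 = 0 by apply: (mixed0 _ i0); table.
have M20 : M i2 i0 = 0 by apply: (mixed0 _ i3); table.
have row_sum i := derivation_row_sum D two_neq0 i.
have half0 (x : F) : x * 2%:R^-1 = 0 -> x = 0.
  by move/eqP; rewrite mulf_eq0 invr_eq0 (negbTE two_neq0) orbF => /eqP.
have M00 : M i0 i0 = 0.
  apply: half0; move: (row_sum i0); rewrite sum_ord5; table.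
  by rewrite M01 M02 M03 M04 !mul0r !addr0.
have M11 : M i1 i1 = 0.
  apply: half0; move: (row_sum i1); rewrite sum_ord5; table.
  by rewrite M10 M12 M13 M14 !mul0r !addr0 add0r.
have M22 : M i2 i2 = 0.
  apply: half0; move: (row_sum i2); rewrite sum_ord5; table.
  by rewrite M20 M21 M23 M24 !mul0r !addr0 add0r.
have M34 : M i3 i4 = - M i3 i3.
  apply/eqP; rewrite -addr_eq0 addrC; apply/eqP/half0; move: (row_sum i3); rewrite sum_ord5; table.
  by rewrite M30 M31 M32 !mul0r !add0r mulrDl.
have M44 : M i4 i4 = - M i4 i3.
  apply/eqP; rewrite -addr_eq0 addrC; apply/eqP/half0; move: (row_sum i4); rewrite sum_ord5; table.
  by rewrite M40 M41 M42 !mul0r !add0r mulrDl.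
by split; apply/rowP; apply: ord5_ind; rewrite !mxE ?eB_coord; table;
  rewrite ?subrr ?subr0 ?sub0r ?mulr0 ?mulr1 ?mulrN1.
Qed.

End Theorem7.

Theorem mainTheorem7 (F : fieldType) (hF : (2%:R : F) != 0)
  (rho sigma alpha : F)
  (hrho : rho != 2%:R^-1) (hsigma : sigma != 2%:R^-1)
  (halpha : alpha != 2%:R^-1) (M : 'M[F]_5) :
  is_derivation (thm7_table rho sigma alpha) M <->
  (e F (inord 0) *m M = 0 /\ e F (inord 1) *m M = 0 /\ e F (inord 2) *m M = 0 /\
   forall v : 'rV[F]_5, exists c : F,
     v *m M = c *: (e F (inord 3) - e F (inord 4))).
Proof.
split => [D | [R0 [R1 [R2 Rim]]]].
  have [R0 R1 R2 R3 R4] := thm7_derivation_rows hF hrho hsigma halpha D.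
  rewrite -!rowE; do 3 (split => //); apply: mulmx_in_line.
  apply: ord5_ind; by [exists 0; rewrite scale0r | eexists; exact: R3 | eexists; exact: R4].
apply: (twin_derivation _ _ _ _ Rim).
- by rewrite -val_eqE /= !inordK.
- exact: thm7_twin_row.
- exact: thm7_twin_col.
- by apply: ord5_ind; rewrite ?eqxx.
Qed.
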